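(* Let $d>0$, $a\geq 7$ be integers with $\gcd(a,d)=1$ and $a=6m$. Let $\mathfrak{p}_4\subset A=k[x_1,x_2,x_3,x_4]$ be the kernel of $x_1\mapsto t^{a}$, $x_2\mapsto t^{2a+d}$, $x_3\mapsto t^{3a+3d}$, $x_4\mapsto t^{4a+6d}$. Then the Koszul complex on $x_3^2-x_1^2x_4,\ x_2^3-x_1^3x_3,\ x_1^{4m+d}-x_4^{m}$ is a minimal free resolution of $A/\mathfrak{p}_4$, its Betti numbers are $\beta_0=1,\beta_1=3,\beta_2=3,\beta_3=1$, and $A/\mathfrak{p}_4$ is a complete intersection. *)

From HB Require Import structures.
From mathcomp Require Import all_boot all_order all_algebra.
From mathcomp Require Import mpoly.
Set Implicit Arguments. Unset Strict Implicit. Unset Printing Implicit Defensive.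
Import Order.TTheory GRing.Theory Num.Theory.
Local Open Scope ring_scope.

Notation Apoly k := {mpoly k[4]}.
Definition x1 {k : fieldType} : Apoly k := 'X_(0 : 'I_4).
Definition x2 {k : fieldType} : Apoly k := 'X_(1 : 'I_4).
Definition x3 {k : fieldType} : Apoly k := 'X_(2 : 'I_4).
Definition x4 {k : fieldType} : Apoly k := 'X_(3 : 'I_4).

Definition curve_map (k : fieldType) (w : 'I_4 -> nat) (p : Apoly k) : {poly k} :=
  mmap (fun c : k => c%:P) (fun i => 'X^(w i)) p.

Definition curve_ideal (k : fieldType) (w : 'I_4 -> nat) : Apoly k -> Prop :=
  fun p => curve_map w p = 0.

Definition w4 (a d : nat) : 'I_4 -> nat :=
  fun i => nth 0%N [:: a; (2 * a + d)%N; (3 * a + 3 * d)%N; (4 * a + 6 * d)%N] i.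

Definition gen_ideal (R : comNzRingType) (s : seq R) : R -> Prop :=
  fun p => exists c : 'I_(size s) -> R, p = \sum_(i < size s) c i * s`_i.

Definition same_ideal (R : comNzRingType) (I J : R -> Prop) : Prop :=
  forall p, I p <-> J p.

(* Regular sequence: f_i is a nonzerodivisor on R/(f_1..f_{i-1}), and
   (f_1,...,f_r) is a proper ideal. *)
Definition regular_seq (R : comNzRingType) (s : seq R) : Prop :=
  (forall i : nat, (i < size s)%N -> forall g : R,
      gen_ideal (take i s) (g * s`_i) -> gen_ideal (take i s) g)
  /\ ~ gen_ideal s 1.

Definition complete_intersection (R : comNzRingType) (I : R -> Prop) : Prop :=
  exists s : seq R, regular_seq s /\ same_ideal I (gen_ideal s).

(* A free complex of length 3 over R:  0 -> R^r3 -D3-> R^r2 -D2-> R^r1 -D1-> R^1,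
   (F_0 = R, as appropriate for resolving a cyclic module R/I),
   free modules are row vectors, maps are v |-> v *m D. *)
Record free_complex3 (R : comNzRingType) := FreeComplex3 {
  rk1 : nat; rk2 : nat; rk3 : nat;
  dif1 : 'M[R]_(rk1, 1);
  dif2 : 'M[R]_(rk2, rk1);
  dif3 : 'M[R]_(rk3, rk2) }.

(* F is a free resolution of A/I (with F_0 = A and augmentation A -> A/I):
   it is a complex, exact at F_3, F_2, F_1, and im(D1) = I (so coker D1 = A/I). *)
Definition is_free_resolution (R : comNzRingType) (I : R -> Prop)
    (F : free_complex3 R) : Prop :=
  [/\ (dif3 F *m dif2 F = 0 /\ dif2 F *m dif1 F = 0),
      (forall v : 'rV[R]_(rk3 F), v *m dif3 F = 0 -> v = 0),
      (forall v : 'rV[R]_(rk2 F), v *m dif2 F = 0 ->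
          exists u : 'rV[R]_(rk3 F), v = u *m dif3 F),
      (forall v : 'rV[R]_(rk1 F), v *m dif1 F = 0 ->
          exists u : 'rV[R]_(rk2 F), v = u *m dif2 F)
    & (forall p : R, I p <-> exists v : 'rV[R]_(rk1 F),
          p = (v *m dif1 F) 0 0)].

(* The maximal homogeneous ideal (x_1,...,x_n): zero constant coefficient. *)
Definition in_max_ideal (n : nat) (k : fieldType) (p : {mpoly k[n]}) : bool :=
  p@_0%MM == 0.

Definition min_matrix (n : nat) (k : fieldType) (r c : nat)
    (M : 'M[{mpoly k[n]}]_(r, c)) : Prop :=
  forall i j, in_max_ideal (M i j).

Definition is_minimal_free_resolution (n : nat) (k : fieldType)
    (I : {mpoly k[n]} -> Prop) (F : free_complex3 {mpoly k[n]}) : Prop :=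
  [/\ is_free_resolution I F, min_matrix (dif1 F), min_matrix (dif2 F)
    & min_matrix (dif3 F)].

Definition betti (R : comNzRingType) (F : free_complex3 R) (i : nat) : nat :=
  match i with 0 => 1%N | 1 => rk1 F | 2 => rk2 F | 3 => rk3 F | _ => 0 end.

(* The Koszul complex on f1 f2 f3, bases: K1 = <e1,e2,e3>,
   K2 = <e2/\e3, e1/\e3, e1/\e2>, K3 = <e1/\e2/\e3>, with
   d(e_i) = f_i, d(e_i/\e_j) = f_i e_j - f_j e_i,
   d(e1/\e2/\e3) = f1 e2/\e3 - f2 e1/\e3 + f3 e1/\e2. *)
Definition koszul3 (R : comNzRingType) (f1 f2 f3 : R) : free_complex3 R :=
  @FreeComplex3 R 3 3 1
    (\matrix_(i < 3, j < 1) [:: f1; f2; f3]`_i)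
    (\matrix_(i < 3, j < 3)
        (nth [::] [:: [:: 0; - f3; f2]; [:: - f3; 0; f1]; [:: - f2; f1; 0]] i)`_j)
    (\matrix_(i < 1, j < 3) [:: f1; - f2; f3]`_j).

From HB Require Import structures.
From mathcomp Require Import all_boot all_order all_algebra.
From mathcomp Require Import mpoly.
From mathcomp Require Import zify ring.
Import Order.TTheory GRing.Theory Num.Theory.
Local Open Scope ring_scope.
Set Implicit Arguments. Unset Strict Implicit. Unset Printing Implicit Defensive.

(* A ring map killing
      (s) and injective on normal forms modulo (s) has kernel exactly (s), and
      any f it does not kill is a nonzerodivisor modulo (s).
   3. The curve: f1, f2, f3 are binomials g1, g2, g3; normal forms modulo
      them have x2-degree < 3, x3-degree < 2, x4-degree < m, on which the
      t-degree is injective because gcd(a, d) = 1, whence p4 = (g1, g2, g3).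
      Two monomial substitutions show that (g1, g2, g3) is regular. *)

Section IdealsOfShortSequences.
Variable R : comNzRingType.
Implicit Types (f g p : R).

Lemma gen_ideal_nil p : gen_ideal [::] p <-> p = 0.
Proof.
split => [[c ->]|->]; first by rewrite big_ord0.
by exists (fun _ => 0); rewrite big_ord0.
Qed.

Lemma gen_ideal1 f p : gen_ideal [:: f] p <-> exists c, p = c * f.
Proof.
split => [[c ->]|[c ->]]; first by exists (c ord0); rewrite big_ord1.
by exists (fun _ => c); rewrite big_ord1.
Qed.

Lemma gen_ideal2 (f1 f2 : R) p :
  gen_ideal [:: f1; f2] p <-> exists c1 c2, p = c1 * f1 + c2 * f2.
Proof.
split => [[c ->]|[c1 [c2 ->]]].
  by exists (c ord0), (c (lift ord0 ord0)); rewrite big_ord_recl big_ord1.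
by exists (nth 0 [:: c1; c2]); rewrite big_ord_recl big_ord1.
Qed.

Lemma gen_ideal3 (f1 f2 f3 : R) p :
  gen_ideal [:: f1; f2; f3] p <-> exists c1 c2 c3, p = c1 * f1 + c2 * f2 + c3 * f3.
Proof.
split => [[c ->]|[c1 [c2 [c3 ->]]]].
  exists (c ord0), (c (lift ord0 ord0)), (c (lift ord0 (lift ord0 ord0))).
  by rewrite !big_ord_recl big_ord0 addr0 addrA.
by exists (nth 0 [:: c1; c2; c3]); rewrite !big_ord_recl big_ord0 addr0 addrA.
Qed.

Definition regular_mod (s : seq R) (f : R) : Prop :=
  forall g, gen_ideal s (g * f) -> gen_ideal s g.

Lemma regular_seq3 (f1 f2 f3 : R) :
  regular_mod [::] f1 -> regular_mod [:: f1] f2 -> regular_mod [:: f1; f2] f3 ->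
  ~ gen_ideal [:: f1; f2; f3] 1 -> regular_seq [:: f1; f2; f3].
Proof. by move=> r1 r2 r3 proper; split=> // -[|[|[|i]]]. Qed.

End IdealsOfShortSequences.

Lemma regular_mod_nil (R : idomainType) (f : R) : f != 0 -> regular_mod [::] f.
Proof.
move=> nz_f g /gen_ideal_nil /eqP; rewrite mulf_eq0 (negbTE nz_f) orbF.
by move=> /eqP g0; apply/gen_ideal_nil.
Qed.

Lemma rmorph_gen_ideal (R S : comNzRingType) (phi : {rmorphism R -> S})
    (s : seq R) (p : R) :
  {in s, forall x, phi x = 0} -> gen_ideal s p -> phi p = 0.
Proof.
move=> phi_s [c ->]; rewrite rmorph_sum big1 // => i _.
by rewrite rmorphM [phi s`_i]phi_s ?mulr0 // mem_nth.
Qed.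

Lemma free_resolution_same_ideal (R : comNzRingType) (I J : R -> Prop)
    (F : free_complex3 R) :
  same_ideal I J -> is_free_resolution J F -> is_free_resolution I F.
Proof. by move=> IJ [? ? ? ? imF]; split=> // p; rewrite IJ. Qed.

Section Koszul3.
Variables (R : comNzRingType) (f1 f2 f3 : R).
Local Notation K := (koszul3 f1 f2 f3).

Definition row3 (a b c : R) : 'rV[R]_3 := \row_(j < 3) [:: a; b; c]`_j.

Lemma row3_eta (v : 'rV[R]_3) : v = row3 (v 0 0) (v 0 1) (v 0 2).
Proof.
apply/matrixP => i [[|[|[|j]]] lt_j3] //; rewrite (ord1 i) !mxE /=;
  by congr (v 0 _); apply: val_inj.
Qed.

Lemma row3_eq0 (a b c : R) : row3 a b c = 0 -> [/\ a = 0, b = 0 & c = 0].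
Proof.
move=> /matrixP v0; have := v0 0 0; have := v0 0 1; have := v0 0 2.
by rewrite !mxE.
Qed.

Lemma koszul3_dif1 (a b c : R) :
  (row3 a b c *m dif1 K) 0 0 = a * f1 + b * f2 + c * f3.
Proof. by rewrite !mxE !big_ord_recl big_ord0 !mxE addr0 addrA. Qed.

Lemma koszul3_dif2 (a b c : R) :
  row3 a b c *m dif2 K = row3 (- b * f3 - c * f2) (- a * f3 + c * f1) (a * f2 + b * f1).
Proof.
apply/matrixP => i [[|[|[|j]]] lt_j3] //;
  rewrite !mxE !big_ord_recl big_ord0 !mxE /=; ring.
Qed.

Lemma koszul3_dif3 (u : 'rV[R]_1) :
  u *m dif3 K = row3 (u 0 0 * f1) (- (u 0 0 * f2)) (u 0 0 * f3).
Proof.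
apply/matrixP => i [[|[|[|j]]] lt_j3] //;
  by rewrite /row3 !mxE big_ord1 !mxE (ord1 i) /= ?mulrN.
Qed.

Lemma koszul3_complex : dif3 K *m dif2 K = 0 /\ dif2 K *m dif1 K = 0.
Proof.
split; apply/matrixP => i j; rewrite !mxE !big_ord_recl big_ord0 !mxE /=.
  by case: j => [[|[|[|j]]] lt_j3] //=; ring.
by case: i => [[|[|[|i]]] lt_i3] //=; ring.
Qed.

Hypotheses (reg1 : regular_mod [::] f1) (reg2 : regular_mod [:: f1] f2)
  (reg3 : regular_mod [:: f1; f2] f3).

Lemma mulIf1 (x y : R) : x * f1 = y * f1 -> x = y.
Proof.
move=> /eqP; rewrite -subr_eq0 -mulrBl => /eqP /gen_ideal_nil /reg1 /gen_ideal_nil.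
by move=> /eqP; rewrite subr_eq0 => /eqP.
Qed.

Lemma koszul3_exact3 (u : 'rV[R]_1) : u *m dif3 K = 0 -> u = 0.
Proof.
rewrite koszul3_dif3 => /row3_eq0 [uf1 _ _].
apply/matrixP => i j; rewrite (ord1 i) (ord1 j) mxE.
by apply: mulIf1; rewrite uf1 mul0r.
Qed.

(* Exactness at K2: a 2-cycle has first entry u f1 (f2 is regular mod f1),
   and cancelling f1 shows it is the boundary of u. *)
Lemma koszul3_exact2 (a b c : R) :
  row3 a b c *m dif2 K = 0 -> exists u : 'rV[R]_1, row3 a b c = u *m dif3 K.
Proof.
rewrite koszul3_dif2 => /row3_eq0 [e1 e2 e3].
have [u a_eq] : exists u, a = u * f1.
  apply/gen_ideal1/reg2/gen_ideal1; exists (- b).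
  by apply/eqP; rewrite mulNr -addr_eq0 e3.
have /mulIf1 b_eq : b * f1 = - (u * f2) * f1 by rewrite -[LHS]subr0 -e3 a_eq; ring.
have /mulIf1 c_eq : c * f1 = u * f3 * f1 by rewrite -[LHS]subr0 -e2 a_eq; ring.
by exists (const_mx u); rewrite koszul3_dif3 !mxE a_eq b_eq c_eq.
Qed.

(* Exactness at K1: for a syzygy a f1 + b f2 + c f3 = 0, regularity of f3
   mod (f1, f2) and of f2 mod f1 write (a, b, c) as a boundary. *)
Lemma koszul3_exact1 (a b c : R) :
  (row3 a b c *m dif1 K) 0 0 = 0 -> exists v : 'rV[R]_3, row3 a b c = v *m dif2 K.
Proof.
rewrite koszul3_dif1 => e.
have [A [B c_eq]] : exists A B, c = A * f1 + B * f2.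
  apply/gen_ideal2/reg3/gen_ideal2; exists (- a), (- b).
  by rewrite -[LHS]subr0 -e; ring.
have [C bB_eq] : exists C, b + B * f3 = C * f1.
  apply/gen_ideal1/reg2/gen_ideal1; exists (- (a + A * f3)).
  by rewrite -[LHS]subr0 -e c_eq; ring.
have b_eq : b = C * f1 - B * f3 by rewrite -bB_eq; ring.
have /mulIf1 a_eq : a * f1 = (- A * f3 - C * f2) * f1.
  by rewrite -[LHS]subr0 -e c_eq b_eq; ring.
by exists (row3 B A C); rewrite koszul3_dif2 a_eq b_eq c_eq; congr row3; ring.
Qed.

Lemma koszul3_image (p : R) :
  gen_ideal [:: f1; f2; f3] p <-> exists v : 'rV[R]_3, p = (v *m dif1 K) 0 0.
Proof.
rewrite gen_ideal3; split => [[a [b [c ->]]]|[v ->]].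
  by exists (row3 a b c); rewrite koszul3_dif1.
by rewrite [v]row3_eta koszul3_dif1; exists (v 0 0), (v 0 1), (v 0 2).
Qed.

Theorem koszul3_resolution : is_free_resolution (gen_ideal [:: f1; f2; f3]) K.
Proof.
split; [exact: koszul3_complex | exact: koszul3_exact3 | | | exact: koszul3_image].
  by move=> v; rewrite [v]row3_eta; apply: koszul3_exact2.
move=> v; rewrite [v]row3_eta => /matrixP /(_ 0 0) v_cycle.
by apply: koszul3_exact1; rewrite v_cycle mxE.
Qed.

End Koszul3.

Section MaximalIdeal.
Variables (n : nat) (k : fieldType).

Lemma in_max_idealN (p : {mpoly k[n]}) : in_max_ideal (- p) = in_max_ideal p.
Proof. by rewrite /in_max_ideal mcoeffN oppr_eq0. Qed.

Lemma gen_ideal_max (s : seq {mpoly k[n]}) (p : {mpoly k[n]}) :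
  all (@in_max_ideal n k) s -> gen_ideal s p -> in_max_ideal p.
Proof.
move=> /(all_nthP 0) s_max [c ->]; rewrite /in_max_ideal raddf_sum /=.
by rewrite big1 // => i _; rewrite rmorphM /= (eqP (s_max i (ltn_ord i))) mulr0.
Qed.

Lemma gen_ideal_max_proper (s : seq {mpoly k[n]}) :
  all (@in_max_ideal n k) s -> ~ gen_ideal s 1.
Proof.
by move=> s_max /(gen_ideal_max s_max); rewrite /in_max_ideal mcoeff1 eqxx oner_eq0.
Qed.

Lemma koszul3_minimal (f1 f2 f3 : {mpoly k[n]}) :
  in_max_ideal f1 -> in_max_ideal f2 -> in_max_ideal f3 ->
  let K := koszul3 f1 f2 f3 in
  [/\ min_matrix (dif1 K), min_matrix (dif2 K) & min_matrix (dif3 K)].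
Proof.
move=> m1 m2 m3; have m0 : in_max_ideal (0 : {mpoly k[n]}) by rewrite /in_max_ideal mcoeff0.
split=> i j; rewrite mxE.
- by case: i => [[|[|[|i]]] ?].
- by case: i => [[|[|[|i]]] ?] //; case: j => [[|[|[|j]]] ?]; rewrite //= in_max_idealN.
- by case: j => [[|[|[|j]]] ?]; rewrite //= in_max_idealN.
Qed.

End MaximalIdeal.

Section Monomials.
Variables (n : nat) (k : fieldType).

Lemma mcoeff_expand (p : {mpoly k[n]}) (mo : 'X_{1..n}) :
  p@_mo = \sum_(m <- msupp p) p@_m * (m == mo)%:R.
Proof.
rewrite {1}(mpolyE p) raddf_sum /=; apply: eq_bigr => m _.
by rewrite mcoeffZ mcoeffX.
Qed.

Definition binom (A B : 'X_{1..n}) : {mpoly k[n]} := 'X_[A] - 'X_[B].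

Lemma binom_neq0 (A B : 'X_{1..n}) : A != B -> binom A B != 0.
Proof.
move=> nAB; apply: contraTneq isT => /(congr1 (mcoeff A)).
by rewrite mcoeffB !mcoeffX eqxx eq_sym (negbTE nAB) mcoeff0 subr0 => /eqP; rewrite oner_eq0.
Qed.

Lemma binom_max (A B : 'X_{1..n}) :
  A != 0%MM -> B != 0%MM -> in_max_ideal (binom A B).
Proof.
by move=> nzA nzB; rewrite /in_max_ideal mcoeffB !mcoeffX (negbTE nzA) (negbTE nzB) subrr.
Qed.

End Monomials.

Section MonomialSubstitution.
Variables (n n' : nat) (k : fieldType) (e : 'I_n -> 'X_{1..n'}).

Definition msubst : {mpoly k[n]} -> {mpoly k[n']} :=
  mmap (@mpolyC n' k) (fun i => 'X_[e i]).
HB.instance Definition _ := GRing.RMorphism.on msubst.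

Definition mexp (m : 'X_{1..n}) : 'X_{1..n'} := (\sum_(i < n) e i *+ m i)%MM.

Lemma mmap1_monomial (m : 'X_{1..n}) :
  mmap1 (fun i => 'X_[e i]) m = 'X_[mexp m] :> {mpoly k[n']}.
Proof.
rewrite /mmap1 /mexp (big_morph _ (@mpolyXD _ _) (@mpolyX0 _ _)).
by apply: eq_bigr => i _; rewrite mpolyXn.
Qed.

Lemma msubst_binom (A B : 'X_{1..n}) :
  msubst (binom k A B) = binom k (mexp A) (mexp B).
Proof. by rewrite rmorphB /= /msubst !mmapX !mmap1_monomial. Qed.

Lemma msubst_binom_eq0 (A B : 'X_{1..n}) :
  mexp A = mexp B -> msubst (binom k A B) = 0.
Proof. by rewrite msubst_binom /binom => ->; rewrite subrr. Qed.

Lemma msubst_binom_neq0 (A B : 'X_{1..n}) :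
  mexp A != mexp B -> msubst (binom k A B) != 0.
Proof. by rewrite msubst_binom; apply: binom_neq0. Qed.

Lemma msubst_inj_on (P : pred 'X_{1..n}) (r : {mpoly k[n]}) :
  {subset msupp r <= P} -> {in P &, injective mexp} -> msubst r = 0 -> r = 0.
Proof.
move=> supp inj r0; apply/mpolyP => mo; rewrite mcoeff0.
have [Pmo|nPmo] := boolP (P mo); last first.
  by apply: memN_msupp_eq0; apply: contra nPmo; apply: supp.
have := congr1 (mcoeff (mexp mo)) r0; rewrite mcoeff0 => <-.
rewrite /msubst /mmap raddf_sum (mcoeff_expand r mo) /=; apply: eq_big_seq => m /supp Pm.
by rewrite mmap1_monomial mcoeffCM mcoeffX (inj_in_eq inj).
Qed.

End MonomialSubstitution.

(* Reduction modulo the binomial F = x_j^q - x^mu (where x_j does not occur in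
   x^mu): rewriting x_j^q to x^mu brings every monomial to one of x_j-degree
   below q, modulo F. *)
Section BinomialReduction.
Variables (n : nat) (k : fieldType) (j : 'I_n) (q : nat) (mu : 'X_{1..n}).
Hypotheses (q_gt0 : (0 < q)%N) (mu_j : mu j = 0%N).
Local Notation F := (binom k (U_(j) *+ q) mu).

Definition reduce_mono (mo : 'X_{1..n}) : 'X_{1..n} :=
  ([multinom if i == j then (mo i %% q)%N else mo i | i < n] + mu *+ (mo j %/ q))%MM.

Lemma reduce_mono_lt (mo : 'X_{1..n}) : (reduce_mono mo j < q)%N.
Proof. by rewrite mnmDE mulmnE mu_j mul0n addn0 mnmE eqxx ltn_mod. Qed.

Lemma reduce_mono_other (mo : 'X_{1..n}) (i : 'I_n) :
  i != j -> reduce_mono mo i = (mo i + mu i * (mo j %/ q))%N.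
Proof. by move=> /negbTE ne; rewrite mnmDE mulmnE mnmE ne. Qed.

Lemma reduce_mono_congr (mo : 'X_{1..n}) :
  exists c, 'X_[mo] - 'X_[reduce_mono mo] = c * F.
Proof.
set t := (mo j %/ q)%N.
pose base : 'X_{1..n} := [multinom if i == j then (mo i %% q)%N else mo i | i < n].
have mo_split : mo = (base + (U_(j) *+ q) *+ t)%MM.
  apply/mnmP => i; rewrite mnmDE !mulmnE mnmE mnm1E.
  case: eqP => [->|/eqP ne]; last by rewrite eq_sym (negbTE ne) !mul0n addn0.
  by rewrite eqxx mul1n mulnC addnC -divn_eq.
rewrite {1}mo_split /reduce_mono -/base -/t !mpolyXD -!mpolyXn -mulrBr subrXX.
exists ('X_[base] * \sum_(i < t) 'X_j ^+ q ^+ (t.-1 - i) * 'X_[mu] ^+ i).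
by rewrite /binom -mpolyXn; ring.
Qed.

Lemma reduce_mod_binom (Q : pred 'X_{1..n}) (p : {mpoly k[n]}) :
  (forall mo, Q mo -> Q (reduce_mono mo)) -> {subset msupp p <= Q} ->
  exists r c, {subset msupp r <= [pred mo | Q mo && (mo j < q)%N]} /\ p = r + c * F.
Proof.
move=> Q_red supp_p; set r := \sum_(m <- msupp p) p@_m *: 'X_[reduce_mono m].
have [c p_r] : exists c, p - r = c * F.
  rewrite {1}(mpolyE p) -sumrB; apply: (big_ind (fun x => exists c, x = c * F)).
  - by exists 0; rewrite mul0r.
  - by move=> x y [cx ->] [cy ->]; exists (cx + cy); rewrite mulrDl.
  - move=> m _; have [c Hc] := reduce_mono_congr m.
    by exists (p@_m *: c); rewrite -scalerBr Hc scalerAl.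
exists r, c; split; last by rewrite -p_r addrC subrK.
move=> mo; rewrite mcoeff_msupp; apply: contraR => /= nQmo; apply/eqP.
rewrite raddf_sum /=; apply: big1_seq => m /andP [_ /supp_p Qm].
rewrite mcoeffZ mcoeffX; case: eqP => [mo_eq|_]; last by rewrite mulr0.
by move: nQmo; rewrite -mo_eq inE /= Q_red ?reduce_mono_lt.
Qed.

End BinomialReduction.

Section CurveMap.
Variables (k : fieldType) (w : 'I_4 -> nat).

HB.instance Definition _ := GRing.RMorphism.copy (curve_map (k := k) w)
  (mmap (@polyC k) (fun i => 'X^(w i))).

Definition wdeg (m : 'X_{1..4}) : nat := \sum_(i < 4) w i * m i.

Lemma mmap1_weight (m : 'X_{1..4}) :
  mmap1 (fun i => 'X^(w i)) m = 'X^(wdeg m) :> {poly k}.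
Proof. by rewrite /mmap1 /wdeg -prodrXr; apply: eq_bigr => i _; rewrite exprM. Qed.

Lemma curve_map_binom0 (A B : 'X_{1..4}) :
  wdeg A = wdeg B -> curve_map w (binom k A B) = 0.
Proof. by move=> AB; rewrite rmorphB /= /curve_map !mmapX !mmap1_weight AB subrr. Qed.

Lemma curve_map_inj_on (P : pred 'X_{1..4}) (r : {mpoly k[4]}) :
  {subset msupp r <= P} -> {in P &, injective wdeg} -> curve_map w r = 0 -> r = 0.
Proof.
move=> supp inj r0; apply/mpolyP => mo; rewrite mcoeff0.
have [Pmo|nPmo] := boolP (P mo); last first.
  by apply: memN_msupp_eq0; apply: contra nPmo; apply: supp.
have := congr1 (fun q : {poly k} => q`_(wdeg mo)) r0; rewrite coef0 => <-.
rewrite /curve_map /mmap coef_sum (mcoeff_expand r mo); apply: eq_big_seq => m /supp Pm.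
by rewrite mmap1_weight coefCM coefXn (inj_in_eq inj) // eq_sym.
Qed.

End CurveMap.

Definition normal_forms (n : nat) (k : fieldType) (s : seq {mpoly k[n]})
    (NF : pred 'X_{1..n}) : Prop :=
  forall p, exists r, {subset msupp r <= NF} /\ gen_ideal s (p - r).

Lemma regular_mod_by_subst (n n' : nat) (k : fieldType) (e : 'I_n -> 'X_{1..n'})
    (s : seq {mpoly k[n]}) (f : {mpoly k[n]}) (NF : pred 'X_{1..n}) :
  {in s, forall x, msubst e x = 0} -> msubst e f != 0 ->
  {in NF &, injective (mexp e)} -> normal_forms s NF -> regular_mod s f.
Proof.
move=> kill_s nz_f inj nf g /(rmorph_gen_ideal kill_s).
rewrite rmorphM => /eqP; rewrite mulf_eq0 (negbTE nz_f) orbF => /eqP g0.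
have [r [supp_r g_r]] := nf g.
suff r0 : r = 0 by move: g_r; rewrite r0 subr0.
apply: (msubst_inj_on supp_r inj).
by rewrite -[r](subKr g) rmorphB /= g0 (rmorph_gen_ideal kill_s g_r) subr0.
Qed.

Lemma curve_ideal_by_normal_forms (k : fieldType) (w : 'I_4 -> nat)
    (s : seq {mpoly k[4]}) (NF : pred 'X_{1..4}) :
  {in s, forall x, curve_map w x = 0} -> {in NF &, injective (wdeg w)} ->
  normal_forms s NF -> same_ideal (curve_ideal w) (gen_ideal s).
Proof.
move=> kill_s inj nf p; split => [p0|]; last exact: rmorph_gen_ideal kill_s.
have [r [supp_r p_r]] := nf p.
suff r0 : r = 0 by move: p_r; rewrite r0 subr0.
apply: (curve_map_inj_on supp_r inj).
by rewrite -[r](subKr p) rmorphB /= p0 (rmorph_gen_ideal kill_s p_r) subr0.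
Qed.

Definition mono4 (a b c e : nat) : 'X_{1..4} :=
  [multinom nth 0%N [:: a; b; c; e] i | i < 4].

Lemma mono4E (a b c e : nat) (i : 'I_4) : mono4 a b c e i = nth 0%N [:: a; b; c; e] i.
Proof. exact: mnmE. Qed.

Lemma mono4_eta (mo : 'X_{1..4}) : mo = mono4 (mo 0) (mo 1) (mo 2) (mo 3).
Proof.
by apply/mnmP => -[[|[|[|[|i]]]] lt_i4] //; rewrite mono4E //=; congr (mo _); apply: val_inj.
Qed.

Lemma mono4_inj (a b c e a' b' c' e' : nat) :
  mono4 a b c e = mono4 a' b' c' e' -> [/\ a = a', b = b', c = c' & e = e'].
Proof.
by move=> /mnmP eq_mono; move: (eq_mono 0) (eq_mono 1) (eq_mono 2) (eq_mono 3); rewrite !mono4E.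
Qed.

Lemma mono4D (a b c e a' b' c' e' : nat) :
  (mono4 a b c e + mono4 a' b' c' e')%MM = mono4 (a + a') (b + b') (c + c') (e + e').
Proof. by apply/mnmP => -[[|[|[|[|i]]]] lt_i4] //; rewrite mnmDE !mono4E. Qed.

Lemma mono4Mn (a b c e t : nat) :
  (mono4 a b c e *+ t)%MM = mono4 (a * t) (b * t) (c * t) (e * t).
Proof. by apply/mnmP => -[[|[|[|[|i]]]] lt_i4] //; rewrite mulmnE !mono4E. Qed.

Lemma U_mono4 (i : 'I_4) :
  U_(i)%MM = mono4 (i == 0 :> nat) (i == 1 :> nat) (i == 2 :> nat) (i == 3 :> nat).
Proof.
apply/mnmP => j; rewrite mnm1E mono4E.
by case: i j => [[|[|[|[|i]]]] lt_i4] [[|[|[|[|j]]]] lt_j4].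
Qed.

Lemma mono4_neq0 (a b c e : nat) : (0 < a + b + c + e)%N -> mono4 a b c e != 0%MM.
Proof.
move=> pos; apply/eqP => /mnmP eq0; move: (eq0 0) (eq0 1) (eq0 2) (eq0 3).
rewrite !mono4E !mnm0E /=; lia.
Qed.

(* Unfolding sums over 'I_4 produces lifted ordinals, renamed here. *)
Lemma ord4_lifts :
  [/\ ord0 = 0 :> 'I_4, lift ord0 ord0 = 1 :> 'I_4,
      lift ord0 (lift ord0 ord0) = 2 :> 'I_4
    & lift ord0 (lift ord0 (lift ord0 ord0)) = 3 :> 'I_4].
Proof. by split; apply: val_inj. Qed.

Lemma mexp4 (n : nat) (e : 'I_4 -> 'X_{1..n}) (mo : 'X_{1..4}) :
  mexp e mo = (e 0%R *+ mo 0%R + e 1%R *+ mo 1%R + e 2%R *+ mo 2%R + e 3%R *+ mo 3%R)%MM.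
Proof.
case: ord4_lifts => o0 o1 o2 o3.
by rewrite /mexp !big_ord_recl big_ord0 addm0 !addmA o3 o2 o1 o0.
Qed.

Lemma wdeg4 (w : 'I_4 -> nat) (mo : 'X_{1..4}) :
  wdeg w mo = (w 0%R * mo 0%R + w 1%R * mo 1%R + w 2%R * mo 2%R + w 3%R * mo 3%R)%N.
Proof.
case: ord4_lifts => o0 o1 o2 o3.
by rewrite /wdeg !big_ord_recl big_ord0 addn0 !addnA o3 o2 o1 o0.
Qed.

Section Generators.
Variables (k : fieldType) (m d : nat).

Definition g1 : {mpoly k[4]} := binom k (mono4 0 0 2 0) (mono4 2 0 0 1).
Definition g2 : {mpoly k[4]} := binom k (mono4 0 3 0 0) (mono4 3 0 1 0).
Definition g3 : {mpoly k[4]} := binom k (mono4 (4 * m + d) 0 0 0) (mono4 0 0 0 m).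

Lemma f1_binom : x3 ^+ 2 - x1 ^+ 2 * x4 = g1.
Proof. by rewrite /x1 /x3 /x4 !mpolyXn -mpolyXD !U_mono4 !mono4Mn mono4D. Qed.

Lemma f2_binom : x2 ^+ 3 - x1 ^+ 3 * x3 = g2.
Proof. by rewrite /x1 /x2 /x3 !mpolyXn -mpolyXD !U_mono4 !mono4Mn mono4D. Qed.

Lemma f3_binom : x1 ^+ (4 * m + d) - x4 ^+ m = g3.
Proof. by rewrite /x1 /x4 !mpolyXn !U_mono4 !mono4Mn /= !mul0n !mul1n. Qed.

Lemma g1_reduction : g1 = binom k (U_(2) *+ 2) (mono4 2 0 0 1).
Proof. by rewrite U_mono4 mono4Mn. Qed.

Lemma g2_reduction : g2 = binom k (U_(1) *+ 3) (mono4 3 0 1 0).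
Proof. by rewrite U_mono4 mono4Mn. Qed.

Lemma g3_reduction : g3 = - binom k (U_(3) *+ m) (mono4 (4 * m + d) 0 0 0).
Proof. by rewrite U_mono4 mono4Mn /= !mul0n mul1n /binom opprB. Qed.

End Generators.

(* Normal forms: modulo g1 the x3-degree is < 2; modulo (g1, g2) moreover
   the x2-degree is < 3 (reduce x2 first, since it feeds x3); modulo
   (g1, g2, g3) moreover the x4-degree is < m. *)
Section NormalForms.
Variables (k : fieldType) (m d : nat).
Hypothesis m_gt0 : (0 < m)%N.

Definition nf1 : pred 'X_{1..4} := [pred mo : 'X_{1..4} | (mo 2%R < 2)%N].
Definition nf12 : pred 'X_{1..4} := [pred mo : 'X_{1..4} | (mo 1%R < 3)%N && (mo 2%R < 2)%N].
Definition nf123 : pred 'X_{1..4} := [pred mo : 'X_{1..4} | nf12 mo && (mo 3%R < m)%N].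

Lemma normal_forms_g1 : normal_forms [:: g1 k] nf1.
Proof.
move=> p; have [r [c [supp_r ->]]] :=
  @reduce_mod_binom _ k 2 2 (mono4 2 0 0 1) isT (mono4E _ _ _ _ _) predT p
    (fun _ _ => isT) (fun _ _ => isT).
exists r; split; first exact: supp_r.
by apply/gen_ideal1; exists c; rewrite g1_reduction addrAC subrr add0r.
Qed.

Lemma normal_forms_g12 : normal_forms [:: g1 k; g2 k] nf12.
Proof.
move=> p; have [r2 [c2 [supp_r2 ->]]] :=
  @reduce_mod_binom _ k 1 3 (mono4 3 0 1 0) isT (mono4E _ _ _ _ _) predT p
    (fun _ _ => isT) (fun _ _ => isT).
have [||r [c1 [supp_r ->]]] :=
  @reduce_mod_binom _ k 2 2 (mono4 2 0 0 1) isT (mono4E _ _ _ _ _)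
    (fun mo => (mo 1%R < 3)%N) r2.
- by move=> mo; rewrite /= reduce_mono_other // mono4E /= mul0n addn0.
- by move=> mo /supp_r2 /andP [].
exists r; split; first exact: supp_r.
apply/gen_ideal2; exists c1, c2.
by rewrite g1_reduction g2_reduction; ring.
Qed.

Lemma normal_forms_g123 : normal_forms [:: g1 k; g2 k; g3 k m d] nf123.
Proof.
move=> p; have [r12 [supp_r12 /gen_ideal2 [c1 [c2 p_r12]]]] := normal_forms_g12 p.
have [||r [c3 [supp_r r12_r]]] :=
  @reduce_mod_binom _ k 3 m (mono4 (4 * m + d) 0 0 0) m_gt0 (mono4E _ _ _ _ _) nf12 r12.
- by move=> mo; rewrite /nf12 /= !reduce_mono_other // !mono4E /= !mul0n !addn0.
- exact: supp_r12.
exists r; split; first exact: supp_r.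
apply/gen_ideal3; exists c1, c2, (- c3).
have F_g3 : binom k (U_(3) *+ m) (mono4 (4 * m + d) 0 0 0) = - g3 k m d.
  by rewrite g3_reduction opprK.
by rewrite -[p](subrK r12) p_r12 r12_r F_g3; ring.
Qed.

End NormalForms.

Lemma coprime_residue_eq (a d s s' T T' : nat) :
  coprime a d -> (s < a)%N -> (s' < a)%N ->
  (a * T + d * s = a * T' + d * s')%N -> s = s'.
Proof.
move=> co_ad; wlog le_ss' : s s' T T' / (s <= s')%N => [hwlog|].
  case: (leqP s s') => [le|/ltnW le] hs hs' E; first exact: hwlog le hs hs' E.
  by apply/esym; apply: hwlog le hs' hs (esym E).
move=> _ lt_s'a E.
have d_diff : (d * (s' - s) = a * (T - T'))%N by rewrite !mulnBr; lia.
have : (a %| s' - s)%N by rewrite -(Gauss_dvdr _ co_ad) d_diff dvdn_mulr.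
by case: (posnP (s' - s)) => [eq0 _|pos /(dvdn_leq pos)]; lia.
Qed.

Section P4.
Variables (k : fieldType) (m d : nat).
Hypotheses (m_gt0 : (0 < m)%N) (co_md : coprime (6 * m) d).
Local Notation a := (6 * m)%N.

Lemma wdeg_w4 (mo : 'X_{1..4}) : wdeg (w4 a d) mo =
  (a * (mo 0%R + 2 * mo 1%R + 3 * mo 2%R + 4 * mo 3%R) + d * (mo 1%R + 3 * mo 2%R + 6 * mo 3%R))%N.
Proof.
rewrite wdeg4 /w4 (_ : nat_of_ord (2%R : 'I_4) = 2%N) // (_ : nat_of_ord (3%R : 'I_4) = 3%N) //=.
lia.
Qed.

(* On normal forms the residue term is < a, so coprimality makes the
   t-degree injective. *)
Lemma wdeg_w4_inj : {in nf123 m &, injective (wdeg (w4 a d))}.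
Proof.
move=> m1 m2 /andP [/andP [m11 m12] m13] /andP [/andP [m21 m22] m23].
rewrite !wdeg_w4 => E.
have eq_s : (m1 1%R + 3 * m1 2%R + 6 * m1 3%R = m2 1%R + 3 * m2 2%R + 6 * m2 3%R)%N.
  by apply: coprime_residue_eq co_md _ _ E; lia.
have [e1 e2 e3] : [/\ m1 1%R = m2 1%R, m1 2%R = m2 2%R & m1 3%R = m2 3%R] by split; lia.
move: E; rewrite e1 e2 e3 => /addIn /eqP; rewrite eqn_pmul2l ?muln_gt0 // => /eqP E.
by rewrite [m1]mono4_eta [m2]mono4_eta; congr mono4; lia.
Qed.

Lemma curve_map_gens : {in [:: g1 k; g2 k; g3 k m d], forall x, curve_map (w4 a d) x = 0}.
Proof.
move=> x; rewrite !inE => /or3P [] /eqP ->; apply: curve_map_binom0;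
  rewrite !wdeg_w4 !mono4E /=; lia.
Qed.

Lemma p4_generators : same_ideal (curve_ideal (w4 a d)) (gen_ideal [:: g1 k; g2 k; g3 k m d]).
Proof.
apply: (curve_ideal_by_normal_forms (NF := nf123 m) curve_map_gens).
  exact: wdeg_w4_inj.
exact: normal_forms_g123.
Qed.

End P4.

(* g1 is a nonzerodivisor, and g2 one modulo g1: the substitution x1 -> x1^2,
   x2 -> x2, x3 -> x1^2 x4, x4 -> x4^2 kills g1, not g2, and is injective on
   the normal forms modulo g1. *)
Section RegularityG1G2.
Variable k : fieldType.

Definition echi (i : 'I_4) : 'X_{1..4} :=
  nth 0%MM [:: mono4 2 0 0 0; mono4 0 1 0 0; mono4 2 0 0 1; mono4 0 0 0 2] i.

Lemma mexp_echi (mo : 'X_{1..4}) :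
  mexp echi mo = mono4 (2 * mo 0%R + 2 * mo 2%R) (mo 1%R) 0 (mo 2%R + 2 * mo 3%R).
Proof. rewrite mexp4 /echi /= !mono4Mn !mono4D; congr mono4; lia. Qed.

Lemma g1_regular : regular_mod [::] (g1 k).
Proof. by apply/regular_mod_nil/binom_neq0/eqP => /mono4_inj []. Qed.

Lemma g2_regular_mod_g1 : regular_mod [:: g1 k] (g2 k).
Proof.
apply: (regular_mod_by_subst (e := echi) (NF := nf1)); last exact: normal_forms_g1.
- by move=> x; rewrite inE => /eqP ->; apply: msubst_binom_eq0; rewrite !mexp_echi !mono4E.
- apply: msubst_binom_neq0; rewrite !mexp_echi !mono4E /=.
  by apply/eqP => /mono4_inj [].
- move=> m1 m2; rewrite !inE => m12 m22; rewrite !mexp_echi => /mono4_inj [e0 e1 _ e3].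
  by rewrite [m1]mono4_eta [m2]mono4_eta; congr mono4; lia.
Qed.

End RegularityG1G2.

(* g3 is a nonzerodivisor modulo (g1, g2): the substitution x1 -> x1^6,
   x2 -> x1^8 x4, x3 -> x1^6 x4^3, x4 -> x4^6 kills g1 and g2, not g3, and is
   injective on the normal forms modulo (g1, g2). *)
Section RegularityG3.
Variables (k : fieldType) (m d : nat).
Hypothesis m_gt0 : (0 < m)%N.

Definition epsi (i : 'I_4) : 'X_{1..4} :=
  nth 0%MM [:: mono4 6 0 0 0; mono4 8 0 0 1; mono4 6 0 0 3; mono4 0 0 0 6] i.

Lemma mexp_epsi (mo : 'X_{1..4}) : mexp epsi mo =
  mono4 (6 * mo 0%R + 8 * mo 1%R + 6 * mo 2%R) 0 0 (mo 1%R + 3 * mo 2%R + 6 * mo 3%R).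
Proof. rewrite mexp4 /epsi /= !mono4Mn !mono4D; congr mono4; lia. Qed.

Lemma g3_regular_mod_g12 : regular_mod [:: g1 k; g2 k] (g3 k m d).
Proof.
apply: (regular_mod_by_subst (e := epsi) (NF := nf12)); last exact: normal_forms_g12.
- move=> x; rewrite !inE => /orP [] /eqP ->; apply: msubst_binom_eq0;
    by rewrite !mexp_epsi !mono4E.
- apply: msubst_binom_neq0; rewrite !mexp_epsi !mono4E /=.
  by apply/eqP => /mono4_inj [_ _ _]; lia.
- move=> m1 m2; rewrite !inE => /andP [m11 m12] /andP [m21 m22].
  rewrite !mexp_epsi => /mono4_inj [e0 _ _ e3].
  by rewrite [m1]mono4_eta [m2]mono4_eta; congr mono4; lia.
Qed.

Lemma gens_in_max_ideal : all (@in_max_ideal 4 k) [:: g1 k; g2 k; g3 k m d].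
Proof. by rewrite /= !binom_max // mono4_neq0 //=; lia. Qed.

Lemma gens_regular_seq : regular_seq [:: g1 k; g2 k; g3 k m d].
Proof.
apply: regular_seq3; [exact: g1_regular | exact: g2_regular_mod_g1 | exact: g3_regular_mod_g12 |].
exact: gen_ideal_max_proper gens_in_max_ideal.
Qed.

End RegularityG3.

(* Corollary 5.2: p4 = (g1, g2, g3) with (g1, g2, g3) a regular sequence in the
   maximal ideal, so the Koszul complex minimally resolves A/p4 and A/p4 is a
   complete intersection. *)
Theorem corollary5p2 (k : fieldType) (a d m : nat) :
  (0 < d)%N -> (7 <= a)%N -> coprime a d -> a = (6 * m)%N ->
  let f1 : {mpoly k[4]} := x3 ^+ 2 - x1 ^+ 2 * x4 in
  let f2 : {mpoly k[4]} := x2 ^+ 3 - x1 ^+ 3 * x3 in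
  let f3 : {mpoly k[4]} := x1 ^+ (4 * m + d) - x4 ^+ m in
  let p4 := curve_ideal (k := k) (w4 a d) in
  [/\ is_minimal_free_resolution p4 (koszul3 f1 f2 f3),
      [/\ betti (koszul3 f1 f2 f3) 0 = 1%N, betti (koszul3 f1 f2 f3) 1 = 3%N,
          betti (koszul3 f1 f2 f3) 2 = 3%N & betti (koszul3 f1 f2 f3) 3 = 1%N]
    & complete_intersection p4].
Proof.
move=> _ a_ge7 co_ad a_eq f1 f2 f3 p4; subst a.
have m_gt0 : (0 < m)%N by lia.
rewrite /f1 /f2 /f3 f1_binom f2_binom f3_binom.
have p4_gens : same_ideal p4 (gen_ideal [:: g1 k; g2 k; g3 k m d]).
  exact: p4_generators.
have resolution : is_free_resolution (gen_ideal [:: g1 k; g2 k; g3 k m d])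
    (koszul3 (g1 k) (g2 k) (g3 k m d)).
  by apply: koszul3_resolution;
    [exact: g1_regular | exact: g2_regular_mod_g1 | exact: g3_regular_mod_g12].
have /and4P [max1 max2 max3 _] := gens_in_max_ideal k d m_gt0.
have [min1 min2 min3] := koszul3_minimal max1 max2 max3.
split=> //; first by split=> //; exact: free_resolution_same_ideal p4_gens resolution.
by exists [:: g1 k; g2 k; g3 k m d]; split=> //; exact: gens_regular_seq.
Qed.
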